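(* Assume $\mathrm{NF}_f(G_0,G_1,G_2,G_3)$, and let $a \in G_1 \setminus G_0$ and $b \in G_2 \setminus G_0$. Then $a$ and $b$ commute in $G_3$ if and only if $a$ commutes with every element of $G_0$, $b$ commutes with every element of $G_0$, and $G_0$ is commutative.
   Context: A group is locally finite if every finitely generated subgroup is finite. An amalgamation try is $\mathbf{x} = (G_{\mathbf{x},0},G_{\mathbf{x},1},G_{\mathbf{x},2},\mathbf{I}_{\mathbf{x},1},\mathbf{I}_{\mathbf{x},2})$ where $G_{\mathbf{x},1},G_{\mathbf{x},2}$ are locally finite groups with common subgroup $G_{\mathbf{x},0}$, $\mathbf{I}_{\mathbf{x},\ell}$ is a set of representatives (without repetition) of the left cosets of $G_{\mathbf{x},0}$ in $G_{\mathbf{x},\ell}$, and $e \in \mathbf{I}_{\mathbf{x},1}\cap\mathbf{I}_{\mathbf{x},2}$. With $\mathcal{U}_{\mathbf{x}} = \{(g_0,g_1,g_2): g_0 \in G_{\mathbf{x},0}, g_\ell \in \mathbf{I}_{\mathbf{x},\ell}\}$, for $g \in G_{\mathbf{x},1}$ the permutation $\mathbf{j}_{\mathbf{x},1}(g)$ maps $(g_0,g_1,g_2)$ to $(g_0',g_1',g_2)$ where $(g_1',g_0') \in \mathbf{I}_{\mathbf{x},1}\times G_{\mathbf{x},0}$ is unique with $g_1'g_0' = g_1g_0g$; symmetrically $\mathbf{j}_{\mathbf{x},2}(g)$ for $g \in G_{\mathbf{x},2}$ maps $(g_0,g_1,g_2)$ to $(g_0',g_1,g_2')$ with $g_2'g_0'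 = g_2g_0g$. Permutations act on the right and $G_{\mathbf{x}}$ is the permutation group generated by $\mathbf{j}_{\mathbf{x},1}(G_{\mathbf{x},1}) \cup \mathbf{j}_{\mathbf{x},2}(G_{\mathbf{x},2})$. $\mathrm{NF}_{\mathrm{fin}}(G_0,G_1,G_2,G_3)$ means: $G_0,G_1,G_2$ finite, $G_3$ locally finite, $G_0 \subseteq G_\ell \subseteq G_3$, $G_3 = \langle G_1\cup G_2\rangle$; for every amalgamation try $\mathbf{x}$ with $G_{\mathbf{x},0} = G_0$, $G_\ell \subseteq G_{\mathbf{x},\ell}$ ($\ell=1,2$) there is a homomorphism $\mathbf{f}:G_3 \to G_{\mathbf{x}}$ with $\mathbf{f}\restriction G_\ell = \mathbf{j}_{\mathbf{x},\ell}\restriction G_\ell$; and for every $a \in G_3\setminus\{e\}$ some such $\mathbf{x},\mathbf{f}$ has $\mathbf{f}(a)\ne e$. $\mathrm{NF}_f(G_0,G_1,G_2,G_3)$ means: $G_0,\dots,G_3$ are locally finite groups, $G_0$ is finite, $G_0 \subseteq G_\ell \subseteq G_3$ for $\ell = 1,2$, and whenever $G_1',G_2'$ are finite groups with $G_0 \subseteq G_\ell' \subseteq G_\ell$ and $G_3' = \langle G_1' \cup G_2'\rangle_{G_3}$, we have $\mathrm{NF}_{\mathrm{fin}}(G_0,G_1',G_2',G_3')$. *)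

From mathcomp Require Import all_boot.

Set Implicit Arguments.
Unset Strict Implicit.
Unset Printing Implicit Defensive.

Local Open Scope group_scope.

Section Basics.
Variable H : groupType.

Definition subgroup (S : H -> Prop) : Prop :=
  S 1 /\ (forall x y, S x -> S y -> S (x * y)) /\ (forall x, S x -> S (x^-1)).

Definition gen (A : H -> Prop) : H -> Prop :=
  fun x => forall S, subgroup S -> (forall y, A y -> S y) -> S x.

Definition finite_set (A : H -> Prop) : Prop :=
  exists s : seq H, forall x, A x -> x \in s.

Definition locally_finite_sub (S : H -> Prop) : Prop :=
  forall s : seq H, (forall x, x \in s -> S x) ->
    finite_set (gen (fun x => x \in s)).

Definition locally_finite : Prop := locally_finite_sub (fun _ => True).

End Basics.

(* An amalgamation try x with G_{x,0} = G0 and G1 <= G_{x,1}, G2 <= G_{x,2}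
   (all of G0, G1, G2 being subgroups of the ambient group T).
   The inclusions G_l <= G_{x,l} are given by embeddings e_l (injective
   homomorphisms on G_l); G0 is the common subgroup, embedded via e_l on G0. *)
Record amalg_try (T : groupType) (G0 G1 G2 : T -> Prop) := AmalgTry {
  at_H1 : groupType;
  at_H2 : groupType;
  at_H1_lf : locally_finite at_H1;
  at_H2_lf : locally_finite at_H2;
  at_e1 : T -> at_H1;
  at_e2 : T -> at_H2;
  at_e1_hom : forall g h, G1 g -> G1 h -> at_e1 (g * h) = at_e1 g * at_e1 h;
  at_e2_hom : forall g h, G2 g -> G2 h -> at_e2 (g * h) = at_e2 g * at_e2 h;
  at_e1_inj : forall g h, G1 g -> G1 h -> at_e1 g = at_e1 h -> g = h;
  at_e2_inj : forall g h, G2 g -> G2 h -> at_e2 g = at_e2 h -> g = h;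
  at_I1 : at_H1 -> Prop;
  at_I2 : at_H2 -> Prop;
  at_I1_e : at_I1 1;
  at_I2_e : at_I2 1;
  at_I1_cover : forall h, exists i, at_I1 i /\ exists g0, G0 g0 /\ h = i * at_e1 g0;
  at_I2_cover : forall h, exists i, at_I2 i /\ exists g0, G0 g0 /\ h = i * at_e2 g0;
  at_I1_norep : forall i i', at_I1 i -> at_I1 i' ->
     (exists g0, G0 g0 /\ i' = i * at_e1 g0) -> i = i';
  at_I2_norep : forall i i', at_I2 i -> at_I2 i' ->
     (exists g0, G0 g0 /\ i' = i * at_e2 g0) -> i = i'
}.

Arguments at_I1 [T G0 G1 G2] a _.
Arguments at_I2 [T G0 G1 G2] a _.

Section Try.
Variables (T : groupType) (G0 G1 G2 : T -> Prop) (x : amalg_try G0 G1 G2).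

Definition pt := (T * at_H1 x * at_H2 x)%type.

Definition inU (u : pt) : Prop :=
  G0 u.1.1 /\ at_I1 x u.1.2 /\ at_I2 x u.2.

Definition j1 (h : at_H1 x) (u v : pt) : Prop :=
  v.2 = u.2 /\ G0 v.1.1 /\ at_I1 x v.1.2 /\
  v.1.2 * at_e1 x v.1.1 = u.1.2 * at_e1 x u.1.1 * h.

Definition j2 (h : at_H2 x) (u v : pt) : Prop :=
  v.1.2 = u.1.2 /\ G0 v.1.1 /\ at_I2 x v.2 /\
  v.2 * at_e2 x v.1.1 = u.2 * at_e2 x u.1.1 * h.

(* successive application (permutations act on the right) of a word of
   generators j_{x,1}(h) / j_{x,2}(h) *)
Fixpoint word_rel (w : seq (at_H1 x + at_H2 x)) (u v : pt) : Prop :=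
  match w with
  | [::] => v = u
  | inl h :: w' => exists m, j1 h u m /\ word_rel w' m v
  | inr h :: w' => exists m, j2 h u m /\ word_rel w' m v
  end.

(* p : U_x -> U_x (represented on pt, only its values on U_x matter) belongs
   to the permutation group G_x generated by j1(G_{x,1}) and j2(G_{x,2})
   (these generating sets are closed under inverses, so G_x consists of
   the finite products of generators) *)
Definition in_Gx (p : pt -> pt) : Prop :=
  exists w, forall u, inU u -> word_rel w u (p u).

Definition hom_to_Gx (S : T -> Prop) (f : T -> pt -> pt) : Prop :=
  (forall g, S g -> in_Gx (f g)) /\
  (forall u, inU u -> f 1 u = u) /\
  (forall g h, S g -> S h -> forall u, inU u -> f (g * h) u = f h (f g u)).

Definition extends_j (f : T -> pt -> pt) : Prop :=
  (forall g, G1 g -> forall u, inU u -> j1 (at_e1 x g) u (f g u)) /\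
  (forall g, G2 g -> forall u, inU u -> j2 (at_e2 x g) u (f g u)).

End Try.

Arguments pt [T G0 G1 G2] x.
Arguments inU [T G0 G1 G2] x u.
Arguments in_Gx [T G0 G1 G2] x p.
Arguments hom_to_Gx [T G0 G1 G2] x S f.
Arguments extends_j [T G0 G1 G2] x f.

Definition NF_fin (T : groupType) (G0 G1 G2 G3 : T -> Prop) : Prop :=
  [/\ subgroup G0, subgroup G1, subgroup G2, subgroup G3 &
  [/\ finite_set G0, finite_set G1, finite_set G2, locally_finite_sub G3 &
  [/\ (forall g, G0 g -> G1 g), (forall g, G0 g -> G2 g),
      (forall g, G1 g -> G3 g), (forall g, G2 g -> G3 g) &
  [/\ (forall g, G3 g <-> gen (fun y => G1 y \/ G2 y) g),
      (forall x : amalg_try G0 G1 G2,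
         exists f, hom_to_Gx x G3 f /\ extends_j x f) &
      (forall a, G3 a -> a <> 1 ->
         exists (x : amalg_try G0 G1 G2) (f : T -> pt x -> pt x),
           [/\ hom_to_Gx x G3 f, extends_j x f &
               exists u, inU x u /\ f a u <> u])]]]].

(* NF_f(G0,G1,G2,G3) with G3 the whole (locally finite) group T *)
Definition NF_f (T : groupType) (G0 G1 G2 : T -> Prop) : Prop :=
  [/\ locally_finite T, subgroup G0, subgroup G1, subgroup G2 &
  [/\ finite_set G0, (forall g, G0 g -> G1 g), (forall g, G0 g -> G2 g) &
  forall G1' G2' : T -> Prop,
    subgroup G1' -> subgroup G2' -> finite_set G1' -> finite_set G2' ->
    (forall g, G0 g -> G1' g) -> (forall g, G1' g -> G1 g) ->
    (forall g, G0 g -> G2' g) -> (forall g, G2' g -> G2 g) ->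
    NF_fin G0 G1' G2' (gen (fun y => G1' y \/ G2' y))]].

(* Everything happens inside the finite groups G1' = <G0, a> and G2' = <G0, b>,
   for which NF_f provides NF_fin.

   If a and b centralize the abelian group G0, then in every amalgamation try
   j(a) sends (g0, g1, g2) to (q g0, g1', g2), where g1' and q depend on g1
   only, and similarly j(b) sends it to (r g0, g1, g2') with r depending on g2
   only.  Hence j(ab) and j(ba) agree, so f maps the commutator [a, b] to the
   identity for every admissible f, and the separation clause of NF_fin forces
   [a, b] = 1.

   Conversely, given h, k in G0, use the try in which G_{x,1} = G_{x,2} is the
   whole group and the cosets a G0, b G0 are represented by a h^-1 and b k^-1.
   Evaluating f(ab) = f(ba) at (1, 1, 1) gives k h^b = h k^a, and the cases
   h = 1, k = 1 and then general h, k yield the three commutation properties. *)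

From Stdlib Require Import ClassicalEpsilon FunctionalExtensionality PropExtensionality.
From mathcomp Require Import all_boot.

Set Implicit Arguments.
Unset Strict Implicit.
Unset Printing Implicit Defensive.

Local Open Scope group_scope.

Section Subgroups.
Variable T : groupType.
Implicit Types (A S : T -> Prop) (a g u : T).

Lemma subgroup1 S : subgroup S -> S 1.
Proof. by case. Qed.

Lemma subgroupM S g u : subgroup S -> S g -> S u -> S (g * u).
Proof. by case=> _ [SM _]; apply: SM. Qed.

Lemma subgroupV S g : subgroup S -> S g -> S g^-1.
Proof. by case=> _ [_ SV]; apply: SV. Qed.

Lemma subgroup_mulr S g u : subgroup S -> S g -> S (u * g) <-> S u.
Proof.
move=> sS Sg; split=> [Sug|Su]; last exact: subgroupM.
by rewrite -(mulgK g u); apply: subgroupM => //; apply: subgroupV.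
Qed.

Lemma subgroup_mull S g u : subgroup S -> S g -> S (g * u) <-> S u.
Proof.
move=> sS Sg; split=> [Sgu|Su]; last exact: subgroupM.
by rewrite -(mulKg g u); apply: subgroupM => //; apply: subgroupV.
Qed.

Lemma gen_subgroup A : subgroup (gen A).
Proof.
split; [|split].
- by move=> S sS _; apply: subgroup1.
- by move=> g u Ag Au S sS AS; apply: subgroupM; [|apply: Ag|apply: Au].
- by move=> g Ag S sS AS; apply: subgroupV; [|apply: Ag].
Qed.

Lemma mem_gen A g : A g -> gen A g.
Proof. by move=> Ag S _; apply. Qed.

Lemma subgroup_commg S a g : subgroup S -> S a -> S g -> S [~ a, g].
Proof.
move=> sS Sa Sg; apply: (subgroupM sS (subgroupV sS Sa)).
exact: subgroupM sS (subgroupV sS Sg) (subgroupM sS Sa Sg).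
Qed.

Definition adjoin A a : T -> Prop := gen (fun g => A g \/ g = a).

Lemma adjoin_subgroup A a : subgroup (adjoin A a).
Proof. exact: gen_subgroup. Qed.

Lemma adjoin_sub A a g : A g -> adjoin A a g.
Proof. by move=> Ag; apply: mem_gen; left. Qed.

Lemma adjoin_mem A a : adjoin A a a.
Proof. by apply: mem_gen; right. Qed.

Lemma adjoin_min A a S : subgroup S -> (forall g, A g -> S g) -> S a ->
  forall g, adjoin A a g -> S g.
Proof. by move=> sS AS Sa g; apply; rewrite // => u [/AS|->]. Qed.

Lemma adjoin_finite A a : locally_finite T -> finite_set A ->
  finite_set (adjoin A a).
Proof.
move=> lfT [s As]; have [t gen_t] := lfT (a :: s) (fun _ _ => I).
exists t => g Ag; apply: gen_t; move: g Ag; apply: adjoin_min.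
- exact: gen_subgroup.
- by move=> u /As su; apply: mem_gen; rewrite /= inE su orbT.
- by apply: mem_gen; rewrite /= inE eqxx.
Qed.

End Subgroups.

Section Transversal.
Variables (T H : groupType) (G0 GL : T -> Prop) (e : T -> H) (I : H -> Prop).
Hypotheses (sG0 : subgroup G0) (G0L : forall g, G0 g -> GL g).
Hypothesis e_hom : forall g h, GL g -> GL h -> e (g * h) = e g * e h.
Hypothesis e_inj : forall g h, GL g -> GL h -> e g = e h -> g = h.
Hypothesis I_norep : forall i i', I i -> I i' ->
  (exists g0, G0 g0 /\ i' = i * e g0) -> i = i'.

Lemma transversal_uniq i i' g g' : I i -> I i' -> G0 g -> G0 g' ->
  i * e g = i' * e g' -> i = i' /\ g = g'.
Proof.
move=> Ii Ii' G0g G0g' E.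
have e0_hom u v : G0 u -> G0 v -> e (u * v) = e u * e v.
  by move=> /G0L GLu /G0L GLv; apply: e_hom.
have G0g'V := subgroupV sG0 G0g'.
have e1 : e 1 = 1.
  by apply: (mulgI (e 1)); rewrite -e0_hom ?mulg1 //; apply: subgroup1.
have eV : e g'^-1 = (e g')^-1.
  by apply: (mulgI (e g')); rewrite -e0_hom ?mulgV.
have ii' : i = i'.
  apply: I_norep => //; exists (g * g'^-1); split; first exact: subgroupM.
  by rewrite e0_hom // eV mulgA E mulgK.
split=> //; apply: e_inj; [exact: G0L | exact: G0L |].
by apply: (mulgI i); rewrite {2}ii'.
Qed.

Lemma transversal_central_step u1 u0 a p q v1 v0 :
  G0 u0 -> GL a -> commute a u0 -> I p -> G0 q -> u1 * e a = p * e q ->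
  I v1 -> G0 v0 -> v1 * e v0 = u1 * e u0 * e a -> v1 = p /\ v0 = q * u0.
Proof.
move=> /[dup] G0u0 /G0L GLu0 GLa cau0 Ip /[dup] G0q /G0L GLq E Iv1 G0v0 Ev.
apply: transversal_uniq => //; first exact: subgroupM.
by rewrite Ev -mulgA -e_hom // -cau0 e_hom // mulgA E -mulgA -e_hom.
Qed.

End Transversal.

Section ActionOnU.
Variables (T : groupType) (G0 G1 G2 : T -> Prop) (x : amalg_try G0 G1 G2).

Lemma in_Gx_inU p u : in_Gx x p -> inU x u -> inU x (p u).
Proof.
case=> w /(_ u) pw Uu; have {pw} := pw Uu; move: (p u).
elim: w u Uu => [|[h|h] w IHw] u Uu v /=; first by move->.
  case=> m [[m2 [G0m [Im _]]] wm]; apply: IHw wm.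
  by rewrite /inU m2; case: Uu => _ [_ ?].
case=> m [[m1 [G0m [Im _]]] wm]; apply: IHw wm.
by rewrite /inU m1; case: Uu => _ [? _].
Qed.

Lemma hom_to_Gx_inU S f g u : hom_to_Gx x S f -> S g -> inU x u -> inU x (f g u).
Proof. by case=> fGx _ Sg; apply: in_Gx_inU (fGx g Sg). Qed.

Lemma hom_to_Gx_commg S f a b : subgroup S -> hom_to_Gx x S f -> S a -> S b ->
  (forall u, inU x u -> f (a * b) u = f (b * a) u) ->
  forall u, inU x u -> f [~ a, b] u = u.
Proof.
move=> sS hf Sa Sb fab u Uu; have [_ [f1 fM]] := hf.
have Sab := subgroupM sS Sa Sb; have Sba := subgroupM sS Sb Sa.
have SbaV := subgroupV sS Sba.
have -> : [~ a, b] = (b * a)^-1 * (a * b) by rewrite invgM -mulgA.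
rewrite fM // fab; last exact: hom_to_Gx_inU hf SbaV Uu.
by rewrite -fM // mulVg f1.
Qed.

End ActionOnU.

Section CentralAction.
Variables (T : groupType) (G0 G1 G2 : T -> Prop) (x : amalg_try G0 G1 G2).
Hypothesis sG0 : subgroup G0.
Hypotheses (G01 : forall g, G0 g -> G1 g) (G02 : forall g, G0 g -> G2 g).

Lemma j1_central a p q (u v : pt x) : G1 a -> (forall g, G0 g -> commute a g) ->
  inU x u -> at_I1 x p -> G0 q -> u.1.2 * at_e1 x a = p * at_e1 x q ->
  j1 (at_e1 x a) u v -> v = (q * u.1.1, p, u.2).
Proof.
move=> G1a ca [G0u _] Ip G0q E; case: v => [[v0 v1] v2].
rewrite /j1 /= => -[-> [G0v0 [Iv1 Ev]]].
by have [-> ->] := transversal_central_step sG0 G01 (@at_e1_hom _ _ _ _ x)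
  (@at_e1_inj _ _ _ _ x) (@at_I1_norep _ _ _ _ x) G0u G1a (ca _ G0u) Ip G0q E
  Iv1 G0v0 Ev.
Qed.

Lemma j2_central b p r (u v : pt x) : G2 b -> (forall g, G0 g -> commute b g) ->
  inU x u -> at_I2 x p -> G0 r -> u.2 * at_e2 x b = p * at_e2 x r ->
  j2 (at_e2 x b) u v -> v = (r * u.1.1, u.1.2, p).
Proof.
move=> G2b cb [G0u _] Ip G0r E; case: v => [[v0 v1] v2].
rewrite /j2 /= => -[-> [G0v0 [Iv2 Ev]]].
by have [-> ->] := transversal_central_step sG0 G02 (@at_e2_hom _ _ _ _ x)
  (@at_e2_inj _ _ _ _ x) (@at_I2_norep _ _ _ _ x) G0u G2b (cb _ G0u) Ip G0r E
  Iv2 G0v0 Ev.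
Qed.

Lemma extends_j_commute S f a b : hom_to_Gx x S f -> extends_j x f ->
  S a -> S b -> G1 a -> G2 b ->
  (forall g, G0 g -> commute a g) -> (forall g, G0 g -> commute b g) ->
  (forall g h, G0 g -> G0 h -> commute g h) ->
  forall u, inU x u -> f (a * b) u = f (b * a) u.
Proof.
move=> hf [ext1 ext2] Sa Sb G1a G2b ca cb cG0 u Uu.
have [_ [_ fM]] := hf; rewrite !fM //.
have [p1 [Ip1 [q [G0q Eq]]]] := @at_I1_cover _ _ _ _ x (u.1.2 * at_e1 x a).
have [p2 [Ip2 [r [G0r Er]]]] := @at_I2_cover _ _ _ _ x (u.2 * at_e2 x b).
have fa := j1_central G1a ca Uu Ip1 G0q Eq (ext1 a G1a u Uu).
have fb := j2_central G2b cb Uu Ip2 G0r Er (ext2 b G2b u Uu).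
have Ufa := hom_to_Gx_inU hf Sa Uu; have Ufb := hom_to_Gx_inU hf Sb Uu.
rewrite (j2_central G2b cb Ufa Ip2 G0r _ (ext2 b G2b _ Ufa)); last by rewrite fa.
rewrite (j1_central G1a ca Ufb Ip1 G0q _ (ext1 a G1a _ Ufb)); last by rewrite fb.
by rewrite fa fb /= !mulgA (cG0 _ _ G0r G0q).
Qed.

End CentralAction.

Section CosetRepresentatives.
Variables (T : groupType) (G0 : T -> Prop).
Hypothesis sG0 : subgroup G0.

Definition coset_rep (c g : T) : T :=
  if excluded_middle_informative (G0 g) then 1
  else if excluded_middle_informative (G0 (c^-1 * g)) then c
  else epsilon (inhabits 1) (fun r => G0 (g^-1 * r)).

Lemma coset_repP c g : G0 (g^-1 * coset_rep c g).
Proof.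
rewrite /coset_rep; case: excluded_middle_informative => [G0g|nG0g] /=.
  by rewrite mulg1; apply: subgroupV.
case: excluded_middle_informative => [G0cg|nG0cg] /=.
  by have := subgroupV sG0 G0cg; rewrite invgM invgK.
apply: (epsilon_spec (inhabits 1) (fun r => G0 (g^-1 * r))).
by exists g; rewrite mulVg; apply: subgroup1.
Qed.

Lemma coset_rep_eq c g h : G0 (g^-1 * h) -> coset_rep c g = coset_rep c h.
Proof.
move=> G0gh; have G0hg : G0 (h^-1 * g).
  by have := subgroupV sG0 G0gh; rewrite invgM invgK.
rewrite /coset_rep.
have -> : G0 h = G0 g.
  by apply: propositional_extensionality; rewrite -{1}(mulVKg g h) subgroup_mulr.
have -> : G0 (c^-1 * h) = G0 (c^-1 * g).
  apply: propositional_extensionality.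
  by rewrite -{1}(mulVKg g h) mulgA subgroup_mulr.
have -> // : (fun r => G0 (h^-1 * r)) = (fun r => G0 (g^-1 * r)).
apply: functional_extensionality => r; apply: propositional_extensionality.
by rewrite -{1}(mulVKg g r) mulgA subgroup_mull.
Qed.

Lemma coset_rep1 c : coset_rep c 1 = 1.
Proof.
by rewrite /coset_rep; case: excluded_middle_informative => // -[]; apply: subgroup1.
Qed.

Lemma coset_rep_id c g : ~ G0 g -> G0 (c^-1 * g) -> coset_rep c g = c.
Proof. by rewrite /coset_rep; do 2 case: excluded_middle_informative. Qed.

Lemma coset_rep_idem c g : coset_rep c (coset_rep c g) = coset_rep c g.
Proof. by apply/esym/coset_rep_eq/coset_repP. Qed.

Lemma coset_rep_decomp c r g0 g : coset_rep c r = r -> G0 g0 -> r * g0 = g ->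
  r = coset_rep c g /\ g0 = (coset_rep c g)^-1 * g.
Proof.
move=> r_rep G0g0 rg0.
suff <- : coset_rep c r = coset_rep c g by rewrite r_rep -rg0 mulKg.
by apply: coset_rep_eq; rewrite -rg0 mulKg.
Qed.

Variables (G1 G2 : T -> Prop) (lfT : locally_finite T).

Lemma coset_rep_cover c g :
  exists r, coset_rep c r = r /\ exists g0, G0 g0 /\ g = r * g0.
Proof.
exists (coset_rep c g); split; first exact: coset_rep_idem.
exists ((coset_rep c g)^-1 * g); split; last by rewrite mulVKg.
by have := subgroupV sG0 (coset_repP c g); rewrite invgM invgK.
Qed.

Lemma coset_rep_norep c r r' : coset_rep c r = r -> coset_rep c r' = r' ->
  (exists g0, G0 g0 /\ r' = r * g0) -> r = r'.
Proof.
move=> rr rr' [g0 [G0g0 r'E]]; rewrite -rr -rr'.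
by apply: coset_rep_eq; rewrite r'E mulKg.
Qed.

Definition coset_rep_try (c1 c2 : T) : amalg_try G0 G1 G2 :=
  @AmalgTry T G0 G1 G2 T T lfT lfT id id
    (fun _ _ _ _ => erefl) (fun _ _ _ _ => erefl)
    (fun _ _ _ _ E => E) (fun _ _ _ _ E => E)
    (fun r => coset_rep c1 r = r) (fun r => coset_rep c2 r = r)
    (coset_rep1 c1) (coset_rep1 c2) (coset_rep_cover c1) (coset_rep_cover c2)
    (@coset_rep_norep c1) (@coset_rep_norep c2).

Lemma coset_rep_try_j1 c1 c2 g (u v : pt (coset_rep_try c1 c2)) :
  j1 (at_e1 _ g) u v ->
  v = ((coset_rep c1 (u.1.2 * u.1.1 * g))^-1 * (u.1.2 * u.1.1 * g),
       coset_rep c1 (u.1.2 * u.1.1 * g), u.2).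
Proof.
case: v => [[v0 v1] v2]; rewrite /j1 /= => -[-> [G0v0 [Iv1 E]]].
by have [-> ->] := coset_rep_decomp Iv1 G0v0 E.
Qed.

Lemma coset_rep_try_j2 c1 c2 g (u v : pt (coset_rep_try c1 c2)) :
  j2 (at_e2 _ g) u v ->
  v = ((coset_rep c2 (u.2 * u.1.1 * g))^-1 * (u.2 * u.1.1 * g),
       u.1.2, coset_rep c2 (u.2 * u.1.1 * g)).
Proof.
case: v => [[v0 v1] v2]; rewrite /j2 /= => -[-> [G0v0 [Iv2 E]]].
by have [-> ->] := coset_rep_decomp Iv2 G0v0 E.
Qed.

End CosetRepresentatives.

Section ForwardRelation.
Variables (T : groupType) (G0 G1 G2 : T -> Prop).
Hypotheses (sG0 : subgroup G0) (lfT : locally_finite T).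

Lemma coset_rep_try_conj a b h k S f :
  let x := coset_rep_try sG0 G1 G2 lfT (a * h^-1) (b * k^-1) in
  G1 a -> G2 b -> ~ G0 a -> ~ G0 b -> G0 h -> G0 k -> S a -> S b ->
  hom_to_Gx x S f -> extends_j x f -> commute a b -> k * h ^ b = h * k ^ a.
Proof.
move=> x G1a G2b nG0a nG0b G0h G0k Sa Sb hf [ext1 ext2] cab.
pose u : pt x := (1, 1, 1).
have Uu : inU x u by split; [apply: subgroup1 | split; apply: coset_rep1].
have [_ [_ fM]] := hf.
have := fM _ _ Sa Sb u Uu; rewrite cab fM //.
rewrite (coset_rep_try_j2 (ext2 _ G2b _ (hom_to_Gx_inU hf Sa Uu))).
rewrite (coset_rep_try_j1 (ext1 _ G1a _ (hom_to_Gx_inU hf Sb Uu))).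
rewrite (coset_rep_try_j1 (ext1 _ G1a _ Uu)) (coset_rep_try_j2 (ext2 _ G2b _ Uu)).
have ra : coset_rep G0 (a * h^-1) a = a * h^-1.
  by apply: coset_rep_id => //; rewrite invgM invgK mulgVK.
have rb : coset_rep G0 (b * k^-1) b = b * k^-1.
  by apply: coset_rep_id => //; rewrite invgM invgK mulgVK.
rewrite /= !mul1g ra rb => -[+ ra' rb']; rewrite ra' -rb'.
by rewrite !invgM !invgK !mulgVK !conjgE !mulgA => ->.
Qed.

End ForwardRelation.

Lemma conj_relation_centralize (T : groupType) (G0 : T -> Prop) (a b : T) :
  G0 1 -> (forall h k, G0 h -> G0 k -> k * h ^ b = h * k ^ a) ->
  [/\ forall g, G0 g -> commute a g, forall g, G0 g -> commute b g &
      forall g h, G0 g -> G0 h -> commute g h].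
Proof.
move=> G01 rel.
have ca g : G0 g -> commute a g.
  move=> G0g; have E := rel 1 g G01 G0g; rewrite conj1g mulg1 mul1g in E.
  by rewrite /commute {1}E conjgE mulVKg.
have cb g : G0 g -> commute b g.
  move=> G0g; have E := rel g 1 G0g G01; rewrite conj1g mulg1 mul1g in E.
  by rewrite /commute -{1}E conjgE mulVKg.
split=> // g h G0g G0h; have := rel h g G0h G0g.
by rewrite /conjg -(cb h G0h) -(ca g G0g) !mulKg.
Qed.

Lemma NF_f_adjoin (T : groupType) (G0 G1 G2 : T -> Prop) (a b : T) :
  NF_f G0 G1 G2 -> G1 a -> G2 b ->
  NF_fin G0 (adjoin G0 a) (adjoin G0 b)
    (gen (fun g => adjoin G0 a g \/ adjoin G0 b g)).
Proof.
move=> [lfT sG0 sG1 sG2 [fG0 G01 G02 NF]] G1a G2b.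
apply: NF; do ?[exact: adjoin_subgroup | exact: adjoin_finite | exact: adjoin_sub].
all: exact: adjoin_min.
Qed.

Theorem claim2p22 (T : groupType) (G0 G1 G2 : T -> Prop) (a b : T) :
  NF_f G0 G1 G2 ->
  G1 a -> ~ G0 a -> G2 b -> ~ G0 b ->
  (a * b = b * a <->
   [/\ (forall g, G0 g -> a * g = g * a),
       (forall g, G0 g -> b * g = g * b) &
       (forall g h, G0 g -> G0 h -> g * h = h * g)]).
Proof.
move=> NF G1a nG0a G2b nG0b; have [lfT sG0 _ _ _] := NF.
have [_ _ _ sG3 [_ _ _ _ [G01' G02' G13 G23 [_ try_hom separation]]]] :=
  NF_f_adjoin NF G1a G2b.
have G1'a := @adjoin_mem _ G0 a; have G2'b := @adjoin_mem _ G0 b.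
have G3a := G13 _ G1'a; have G3b := G23 _ G2'b.
split=> [cab | [ca cb cG0]].
  apply: conj_relation_centralize (subgroup1 sG0) _ => h k G0h G0k.
  have [f [hf ef]] := try_hom (coset_rep_try sG0 _ _ lfT (a * h^-1) (b * k^-1)).
  exact: coset_rep_try_conj G1'a G2'b nG0a nG0b G0h G0k G3a G3b hf ef cab.
apply/commgP; have [//|/eqP ab_ne1] := eqVneq [~ a, b] 1.
have [x [f [hf ef [u [Uu fu_ne]]]]] :=
  separation _ (subgroup_commg sG3 G3a G3b) ab_ne1.
exfalso; apply: fu_ne.
have fab := extends_j_commute sG0 G01' G02' hf ef G3a G3b G1'a G2'b ca cb cG0.
exact: hom_to_Gx_commg sG3 hf G3a G3b fab _ Uu.
Qed.
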